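(* If $G$ is a regular hypo-efficient domination graph having at least one $\gamma$-critical vertex, then $|V(G)|=(\Delta(G)+1)(\gamma(G)-1)+1=(\delta(G)+1)(\gamma(G)-1)+1$.
   Context: All graphs are finite, simple and undirected. For $v\in V(G)$, $N[v]$ is the closed neighborhood of $v$. A set $D\subseteq V(G)$ is dominating if every vertex of $G$ not in $D$ has a neighbor in $D$; $\gamma(G)$ is the minimum size of a dominating set. A vertex $v$ is $\gamma$-critical if $\gamma(G-v)<\gamma(G)$. A set $D\subseteq V(H)$ is an efficient dominating set (EDS) of $H$ if $|N_H[v]\cap D|=1$ for every $v\in V(H)$. $G$ is a hypo-efficient domination graph if $G$ has no EDS but $G-v$ has at least one EDS for every $v\in V(G)$. $\delta(G)$, $\Delta(G)$ are the minimum and maximum degree. *)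

From mathcomp Require Import all_boot.
Set Implicit Arguments. Unset Strict Implicit. Unset Printing Implicit Defensive.

(* Subgraphs G - v are handled as induced subgraphs
   G[S] on a vertex set S : {set T}; the whole graph is G[setT]. *)

Section Graph.
Variables (T : finType) (e : rel T).

Definition simple_graph : Prop := symmetric e /\ irreflexive e.

Definition cnbhd (S : {set T}) (v : T) : {set T} :=
  [set u in S | (u == v) || e v u].

Definition dominating (S D : {set T}) : bool :=
  (D \subset S) && [forall x in S, (x \in D) || [exists y in D, e x y]].

(* domination number of G[S] (S itself is always dominating) *)
Definition gamma (S : {set T}) : nat :=
  \big[minn/#|S|]_(D : {set T} | dominating S D) #|D|.

Definition EDS (S D : {set T}) : bool :=
  (D \subset S) && [forall v in S, #|cnbhd S v :&: D| == 1].

Definition has_EDS (S : {set T}) : Prop := exists D, EDS S D.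

Definition hypo_efficient : Prop :=
  ~ has_EDS setT /\ forall v : T, has_EDS (setT :\ v).

Definition gamma_critical (v : T) : Prop := gamma (setT :\ v) < gamma setT.

Definition deg (v : T) : nat := #|[set u | e v u]|.

Definition maxdeg : nat := \max_(v : T) deg v.
Definition mindeg : nat := \big[minn/#|T|]_(v : T) deg v.

Definition regular : Prop := forall u v : T, deg u = deg v.
End Graph.

(* Let v be gamma-critical and D an efficient dominating set of G - v.  An
   efficient dominating set is a minimum dominating set, so |D| = gamma(G - v)
   < gamma(G).  Hence D has no neighbour of v (otherwise D would dominate G),
   while v |: D dominates G; thus gamma(G) = |D| + 1.  The closed
   neighbourhoods of the vertices of D partition G - v, and since none of them
   meets v each has size Delta + 1, so |V| - 1 = |D| (Delta + 1). *)

From mathcomp Require Import all_boot.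
Set Implicit Arguments.

Lemma bigminn_leq (I : finType) (P : pred I) (F : I -> nat) x j :
  P j -> \big[minn/x]_(i | P i) F i <= F j.
Proof.
move=> Pj; have : j \in index_enum I by rewrite mem_index_enum.
elim: (index_enum _) => [|a r IH] //; rewrite big_cons in_cons.
case/orP => [/eqP <-|Hr]; first by rewrite Pj geq_minl.
case: (P a); last exact: IH.
exact: leq_trans (geq_minr _ _) (IH Hr).
Qed.

Lemma bigminn_geq (I : finType) (P : pred I) (F : I -> nat) x n :
  n <= x -> (forall i, P i -> n <= F i) -> n <= \big[minn/x]_(i | P i) F i.
Proof.
move=> nx nF; elim/big_ind: _ => // a b na nb.
by rewrite leq_min na nb.
Qed.

Section Domination.
Variables (T : finType) (e : rel T).
Hypothesis e_sym : symmetric e.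
Hypothesis e_irr : irreflexive e.

Lemma gamma_leq {S D : {set T}} : dominating e S D -> gamma e S <= #|D|.
Proof. exact: bigminn_leq. Qed.

Lemma gamma_geq (S : {set T}) n :
  n <= #|S| -> (forall D, dominating e S D -> n <= #|D|) -> n <= gamma e S.
Proof. exact: bigminn_geq. Qed.

Lemma card_setI_sum (X B : {set T}) : #|X :&: B| = \sum_(b in B) (b \in X).
Proof.
rewrite -sum1_card big_mkcond [RHS]big_mkcond /=.
by apply: eq_bigr => i _; rewrite !inE; case: (i \in X); case: (i \in B).
Qed.

(* Counting the pairs (a, b) in A x B with a and b equal or adjacent. *)
Lemma sum_card_cnbhdI (S A B : {set T}) : A \subset S -> B \subset S ->
  \sum_(a in A) #|cnbhd e S a :&: B| = \sum_(b in B) #|cnbhd e S b :&: A|.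
Proof.
move=> /subsetP AS /subsetP BS.
under eq_bigr => a _ do rewrite card_setI_sum.
under [RHS]eq_bigr => b _ do rewrite card_setI_sum.
rewrite exchange_big /=; apply: eq_bigr => b Hb; apply: eq_bigr => a Ha.
by rewrite !inE (AS a Ha) (BS b Hb) /= eq_sym (e_sym a b).
Qed.

Lemma EDS_card_sum {S D : {set T}} :
  EDS e S D -> #|S| = \sum_(d in D) #|cnbhd e S d|.
Proof.
case/andP => DS /forall_inP HD.
have -> : #|S| = \sum_(u in S) #|cnbhd e S u :&: D|.
  by rewrite -sum1_card; apply: eq_bigr => u Su; rewrite (eqP (HD u Su)).
rewrite sum_card_cnbhdI //; apply: eq_bigr => d _; rewrite (setIidPl _) //.
by apply/subsetP => u; rewrite inE => /andP [].
Qed.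

Lemma EDS_dominating {S D : {set T}} : EDS e S D -> dominating e S D.
Proof.
case/andP => DS /forall_inP HD; rewrite /dominating DS /=.
apply/forall_inP => x Sx.
have : 0 < #|cnbhd e S x :&: D| by rewrite (eqP (HD x Sx)).
rewrite card_gt0 => /set0Pn [y]; rewrite !inE => /andP [/andP [_ /orP[/eqP ->|exy]] Dy].
  by rewrite Dy.
by apply/orP; right; apply/existsP; exists y; rewrite Dy.
Qed.

(* Each vertex of a dominating set D' sees exactly one vertex of D. *)
Lemma EDS_card_leq (S D D' : {set T}) :
  EDS e S D -> dominating e S D' -> #|D| <= #|D'|.
Proof.
move=> HD; have /andP [DS /forall_inP H1] := HD.
case/andP => D'S /forall_inP HD'.
have -> : #|D'| = \sum_(d in D') #|cnbhd e S d :&: D|.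
  by rewrite -sum1_card; apply: eq_bigr => u Hu; rewrite (eqP (H1 u (subsetP D'S u Hu))).
rewrite -sum_card_cnbhdI // -sum1_card; apply: leq_sum => d Dd.
have Sd := subsetP DS d Dd; rewrite card_gt0; apply/set0Pn.
case/orP: (HD' d Sd) => [D'd|/existsP [y /andP [D'y edy]]].
  by exists d; rewrite !inE eqxx Sd.
by exists y; rewrite !inE edy orbT D'y (subsetP D'S y D'y).
Qed.

Lemma gamma_EDS {S D : {set T}} : EDS e S D -> gamma e S = #|D|.
Proof.
move=> HD; apply/eqP; rewrite eqn_leq gamma_leq ?EDS_dominating //=.
apply: gamma_geq => [|D']; last exact: EDS_card_leq.
by case/andP: HD => /subset_leq_card.
Qed.

Lemma dominating_setU1_adj {S D : {set T}} v d :
  dominating e S D -> d \in D -> e v d -> dominating e (v |: S) D.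
Proof.
case/andP => DS /forall_inP HD Dd evd.
rewrite /dominating (subset_trans DS (subsetUr _ _)) /=.
apply/forall_inP => x; rewrite !inE => /orP [/eqP ->|/HD //].
by apply/orP; right; apply/existsP; exists d; rewrite Dd.
Qed.

Lemma dominating_setU1 {S D : {set T}} v :
  dominating e S D -> dominating e (v |: S) (v |: D).
Proof.
case/andP => DS /forall_inP HD; rewrite /dominating setUS //=.
apply/forall_inP => x; rewrite !inE => /orP [->//|/HD /orP [->|]].
  by rewrite orbT.
case/existsP => y /andP [Dy exy].
by apply/orP; right; apply/existsP; exists y; rewrite !inE Dy orbT.
Qed.

Lemma cnbhdT_setD1 v d : ~~ e d v -> d != v ->
  cnbhd e (setT :\ v) d = d |: [set u | e d u].
Proof.
move=> /negbTE edv dv; apply/setP => u; rewrite !inE.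
case: (eqVneq u d) => [->|ud] /=; first by rewrite dv.
by case: (eqVneq u v) => [->|].
Qed.

Lemma card_cnbhdT_setD1 v d : ~~ e d v -> d != v ->
  #|cnbhd e (setT :\ v) d| = (deg e d).+1.
Proof. by move=> edv dv; rewrite cnbhdT_setD1 // cardsU1 inE e_irr. Qed.

Section CriticalVertex.
Context {v : T} {D : {set T}}.
Hypothesis v_critical : gamma_critical e v.
Hypothesis D_EDS : EDS e (setT :\ v) D.

Let setD1vK : v |: (setT :\ v) = setT.
Proof. by rewrite setD1K. Qed.

Lemma critical_EDS_notin : v \notin D.
Proof. by case/andP: D_EDS => /subsetP DS _; apply/negP => /DS; rewrite !inE eqxx. Qed.

Lemma critical_EDS_nonadj d : d \in D -> ~~ e v d.
Proof.
move=> Dd; apply/negP => evd.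
have := dominating_setU1_adj (EDS_dominating D_EDS) Dd evd.
rewrite setD1vK => /gamma_leq.
by rewrite -(gamma_EDS D_EDS) leqNgt v_critical.
Qed.

Lemma gamma_critical_EDS : gamma e setT = #|D|.+1.
Proof.
apply/eqP; rewrite eqn_leq; apply/andP; split.
  have := gamma_leq (dominating_setU1 v (EDS_dominating D_EDS)).
  by rewrite setD1vK cardsU1 critical_EDS_notin.
by have := v_critical; rewrite /gamma_critical (gamma_EDS D_EDS).
Qed.

Lemma card_critical_EDS : regular e -> #|T| = #|D| * (deg e v).+1 + 1.
Proof.
move=> reg; rewrite -cardsT (cardsD1 v setT) inE (EDS_card_sum D_EDS) addnC.
rewrite -sum1_card big_distrl /=; congr (_ + _); apply: eq_bigr => d Dd.
have dv : d != v by apply: contraNneq critical_EDS_notin => <-.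
by rewrite mul1n card_cnbhdT_setD1 // ?(reg d v) // e_sym critical_EDS_nonadj.
Qed.

End CriticalVertex.
End Domination.

Lemma regular_maxdeg (T : finType) (e : rel T) v :
  regular e -> maxdeg e = deg e v.
Proof.
move=> reg; apply/eqP; rewrite eqn_leq leq_bigmax andbT.
by apply/bigmax_leqP => u _; rewrite (reg u v).
Qed.

Lemma regular_mindeg (T : finType) (e : rel T) v :
  regular e -> mindeg e = deg e v.
Proof.
move=> reg; apply/eqP; rewrite eqn_leq bigminn_leq //=.
apply: bigminn_geq => [|u _]; first exact: max_card.
by rewrite (reg u v).
Qed.

Theorem corollary3p17 (T : finType) (e : rel T) :
  simple_graph e -> regular e -> hypo_efficient e ->
  (exists v : T, gamma_critical e v) ->
  #|T| = (maxdeg e).+1 * (gamma e setT - 1) + 1 /\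
  #|T| = (mindeg e).+1 * (gamma e setT - 1) + 1.
Proof.
move=> [e_sym e_irr] reg [_ hypo] [v crit].
have [D HD] := hypo v.
rewrite (regular_maxdeg v reg) (regular_mindeg v reg).
rewrite (gamma_critical_EDS e_sym crit HD) subn1 /= mulnC.
by rewrite -(card_critical_EDS e_sym e_irr crit HD reg).
Qed.
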